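(* For any uncountable analytic set $A\subseteq L(E)$, there are a nonempty perfect set $P\subseteq A$ and an infinite-dimensional subspace $V$ of $E$ such that either (i) for all $T\in P$, $V\subseteq\ker(T)$, or (ii) for all $T\in P$, $T\restriction V$ is injective.
   Context: $F$ is a countable (possibly finite) field and $E$ is a countably infinite-dimensional $F$-vector space (with a fixed basis), regarded as a discrete set. $L(E)$ is the set of all $F$-linear maps $E\to E$ with the topology inherited as a subspace of the product space $E^E$; it is an uncountable Polish space. *)

From mathcomp Require Import all_boot all_order all_algebra.
From mathcomp Require Import boolp classical_sets functions cardinality.

Set Implicit Arguments.
Unset Strict Implicit.
Unset Printing Implicit Defensive.
Import GRing.Theory.
Local Open Scope ring_scope.
Local Open Scope classical_set_scope.

Definition nat_basis (F : fieldType) (E : lmodType F) (e : nat -> E) : Prop :=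
  (forall (n : nat) (c : 'I_n -> F),
      \sum_(i < n) c i *: e i = 0 -> forall i, c i = 0) /\
  (forall v : E, exists (n : nat) (c : 'I_n -> F), v = \sum_(i < n) c i *: e i).

Definition is_linear_map (F : fieldType) (E : lmodType F) (T : E -> E) : Prop :=
  forall (a : F) (u v : E), T (a *: u + v) = a *: T u + T v.

Definition LE (F : fieldType) (E : lmodType F) : set (E -> E) :=
  [set T | is_linear_map T].

(* Basic open neighbourhoods of the product topology on E^E (E discrete):
   S agrees with T on the finite list of points xs. *)
Definition agree_on (F : fieldType) (E : lmodType F) (xs : seq E) (S T : E -> E) :
  Prop := forall x, x \in xs -> S x = T x.

Definition LE_closed (F : fieldType) (E : lmodType F) (P : set (E -> E)) : Prop :=
  P `<=` @LE F E /\
  forall T, @LE F E T -> (forall xs : seq E, exists S, P S /\ agree_on xs S T) -> P T.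

Definition LE_perfect (F : fieldType) (E : lmodType F) (P : set (E -> E)) : Prop :=
  LE_closed P /\
  forall T, P T -> forall xs : seq E, exists S, P S /\ S <> T /\ agree_on xs S T.

Definition baire_continuous (F : fieldType) (E : lmodType F)
  (f : (nat -> nat) -> (E -> E)) : Prop :=
  forall (alpha : nat -> nat) (x : E), exists n : nat,
    forall beta : nat -> nat, (forall i, (i < n)%N -> beta i = alpha i) ->
      f beta x = f alpha x.

Definition LE_analytic (F : fieldType) (E : lmodType F) (A : set (E -> E)) : Prop :=
  A `<=` @LE F E /\
  (A = set0 \/ exists f : (nat -> nat) -> (E -> E),
                 baire_continuous f /\ range f = A).

Definition subspace (F : fieldType) (E : lmodType F) (V : set E) : Prop :=
  V 0 /\ forall (a : F) (u v : E), V u -> V v -> V (a *: u + v).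

Definition infinite_dim (F : fieldType) (E : lmodType F) (V : set E) : Prop :=
  forall n : nat, exists v : 'I_n -> E,
    (forall i, V (v i)) /\
    forall c : 'I_n -> F, \sum_(i < n) c i *: v i = 0 -> forall i, c i = 0.

From HB Require Import structures.
From mathcomp Require Import all_boot all_order all_algebra.
From mathcomp Require Import boolp classical_sets functions cardinality.
Import GRing.Theory.
Local Open Scope ring_scope.
Local Open Scope classical_set_scope.

(* Write A = f(N^N) with f continuous, and enumerate E. A fusion argument builds
   a Cantor scheme of cylinders of N^N with uncountable images, each splitting
   into two cylinders whose images are separated at some point of E, together
   with vectors v_0, v_1, ... such that every map in the images at level n
   satisfies a closed condition Q(v_0, ..., v_n) that survives truncation. The
   branches give a perfect set P all of whose members satisfy Q along the whole
   sequence, and V is the span of the v_n.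
   If some cylinder has uncountably many images T sending infinitely many basis
   vectors e_(J k) into the span of T(w), for a fixed finite w, then Q says that
   the v_i are independent and killed by T: for m nodes, m |w| + 1 fresh vectors
   e_(J k) have a nontrivial combination killed by uncountably many maps of every
   node. Otherwise Q says that T(v_0), ..., T(v_n) are independent, and some basis
   vector can always be appended. *)

Set Implicit Arguments.
Unset Strict Implicit.
Unset Printing Implicit Defensive.

(** * Linear algebra *)

Section SeqSpan.
Variables (F : fieldType) (E : lmodType F).

Definition in_span (xs : seq E) (v : E) : Prop :=
  exists c : nat -> F, v = \sum_(i < size xs) c i *: nth 0 xs i.

Definition lin_indep (xs : seq E) : Prop :=
  forall c : nat -> F, \sum_(i < size xs) c i *: nth 0 xs i = 0 ->
    forall i, (i < size xs)%N -> c i = 0.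

Lemma big_nth_rcons (xs : seq E) x (c : nat -> F) :
  \sum_(i < size (rcons xs x)) c i *: nth 0 (rcons xs x) i =
  \sum_(i < size xs) c i *: nth 0 xs i + c (size xs) *: x.
Proof.
rewrite size_rcons big_ord_recr /= nth_rcons ltnn eqxx; congr (_ + _).
by apply: eq_bigr => i _; rewrite nth_rcons ltn_ord.
Qed.

Lemma sum_scale_widen n m (c : nat -> F) (g : nat -> E) : (n <= m)%N ->
  \sum_(i < n) c i *: g i = \sum_(i < m) (if (i < n)%N then c i else 0) *: g i.
Proof.
move=> hnm; rewrite (big_ord_widen m (fun i => c i *: g i) hnm) big_mkcond /=.
by apply: eq_bigr => i _; case: ifP => // _; rewrite scale0r.
Qed.

Lemma lin_indep_rconsl xs x : lin_indep (rcons xs x) -> lin_indep xs.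
Proof.
move=> hind c hc i hi.
pose c' j := if (j < size xs)%N then c j else 0.
have := hind c'; rewrite big_nth_rcons /c' ltnn scale0r addr0.
under eq_bigr do rewrite ltn_ord.
by move=> /(_ hc i); rewrite size_rcons hi; apply; rewrite ltnS ltnW.
Qed.

Lemma lin_indep_rcons xs x : lin_indep xs -> ~ in_span xs x -> lin_indep (rcons xs x).
Proof.
move=> hind hx c; rewrite big_nth_rcons => hc.
have hlast : c (size xs) = 0.
  apply: contrapT => /eqP hne; apply: hx.
  exists (fun j => - (c (size xs))^-1 * c j).
  under eq_bigr do rewrite -scalerA.
  rewrite -scaler_sumr.
  have -> : \sum_(i < size xs) c i *: nth 0 xs i = - (c (size xs) *: x).
    by apply/eqP; rewrite -subr_eq0 opprK hc.
  by rewrite scalerN scaleNr opprK scalerA mulVf ?scale1r.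
move: hc; rewrite hlast scale0r addr0 => hc i; rewrite size_rcons ltnS leq_eqVlt.
by case/orP => [/eqP -> //|]; apply: hind.
Qed.

Lemma in_span_rcons xs x v : in_span xs v -> in_span (rcons xs x) v.
Proof.
move=> [c ->]; pose c' i := if i == size xs then 0 else c i.
exists c'; rewrite big_nth_rcons /c' eqxx scale0r addr0.
by apply: eq_bigr => i _; rewrite ltn_eqF.
Qed.

Lemma in_span_trans (xs ys : seq E) v :
  (forall x, x \in xs -> in_span ys x) -> in_span xs v -> in_span ys v.
Proof.
move=> hxs [b ->].
have hspan (j : 'I_(size xs)) : in_span ys (nth 0 xs j) by apply: hxs; exact: mem_nth.
have [C hC] := choice hspan.
exists (fun k => \sum_(j < size xs) b j * C j k).
under eq_bigr => j _ do rewrite hC scaler_sumr.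
rewrite exchange_big /=; apply: eq_bigr => k _; rewrite scaler_suml.
by apply: eq_bigr => j _; rewrite scalerA.
Qed.

End SeqSpan.

Lemma homogeneous_system_nontrivial (F : fieldType) (I : finType) (N : nat)
    (M : 'I_N -> I -> F) :
  (#|I| < N)%N -> exists c : 'I_N -> F, (exists i, c i != 0) /\
    forall k : I, \sum_(i < N) c i * M i k = 0.
Proof.
move=> hN.
pose A : 'M[F]_(N, #|I|) := \matrix_(i, k) M i (enum_val k).
have hker : kermx A != 0.
  rewrite -mxrank_eq0 mxrank_ker -lt0n subn_gt0.
  exact: leq_ltn_trans (rank_leq_col A) hN.
have [i0 [j0 hj0]] : exists i0 j0, kermx A i0 j0 != 0.
  move: hker; case/eqP/matrixP/boolp.existsNP => i0 /boolp.existsNP [j0 hj0].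
  by exists i0, j0; apply/eqP => h; apply: hj0; rewrite h mxE.
exists (fun i => kermx A i0 i); split; first by exists j0.
have hA i k : A i k = M i (enum_val k) by rewrite mxE.
move=> k; have := mulmx_ker A => /matrixP /(_ i0 (enum_rank k)).
rewrite !mxE => h; apply: etrans h; apply: eq_bigr => i _; by rewrite hA enum_rankK.
Qed.

Section LinearMap.
Variables (F : fieldType) (E : lmodType F) (T : E -> E).
Hypothesis hT : is_linear_map T.

Let Tlin : {linear E -> E} := HB.pack T (GRing.isLinear.Build F E E *:%R T hT).

Lemma lin_map0 : T 0 = 0.
Proof. exact: linear0 Tlin. Qed.

Lemma lin_map_sum n (c : 'I_n -> F) (g : 'I_n -> E) :
  T (\sum_(i < n) c i *: g i) = \sum_(i < n) c i *: T (g i).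
Proof. by rewrite -[T]/(Tlin : E -> E) linear_sum; under eq_bigr do rewrite linearZ. Qed.

Lemma lin_map_vanish N d (c : 'I_N -> F) (u : 'I_N -> E) (w : 'I_d -> E)
    (C : 'I_N -> 'I_d -> F) :
  (forall i, T (u i) = \sum_(k < d) C i k *: T (w k)) ->
  (forall k, \sum_(i < N) c i * C i k = 0) ->
  T (\sum_(i < N) c i *: u i) = 0.
Proof.
move=> hu hc; rewrite lin_map_sum.
under eq_bigr => i _ do rewrite hu scaler_sumr.
rewrite exchange_big big1 // => k _.
by under eq_bigr do rewrite scalerA; rewrite -scaler_suml hc scale0r.
Qed.

Lemma in_span_map (ws : seq E) x :
  in_span (map T ws) x <-> exists c : nat -> F, x = \sum_(k < size ws) c k *: T (nth 0 ws k).
Proof.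
rewrite /in_span size_map.
by split=> -[c ->]; exists c; apply: eq_bigr => k _; rewrite (nth_map 0).
Qed.

End LinearMap.

Section NatBasis.
Variables (F : fieldType) (E : lmodType F) (e : nat -> E).
Hypothesis he : nat_basis e.

Lemma basis_coef0 n (c : nat -> F) : \sum_(i < n) c i *: e i = 0 ->
  forall i, (i < n)%N -> c i = 0.
Proof. by move=> h i hi; exact: he.1 n (fun j : 'I_n => c j) h (Ordinal hi). Qed.

Lemma basis_decomp v : exists n (c : nat -> F), v = \sum_(i < n) c i *: e i.
Proof.
have [n [c ->]] := he.2 v.
exists n, (fun i => if insub i is Some j then c j else 0).
by apply: eq_bigr => i _; rewrite valK.
Qed.

Lemma in_span_mkseq a v :
  in_span (mkseq e a) v <-> exists c : nat -> F, v = \sum_(i < a) c i *: e i.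
Proof.
rewrite /in_span size_mkseq.
by split=> -[c ->]; exists c; apply: eq_bigr => i _; rewrite nth_mkseq.
Qed.

Lemma seq_in_basis_span (xs : seq E) :
  exists a, forall x, x \in xs -> in_span (mkseq e a) x.
Proof.
elim: xs => [|x xs [a ih]]; first by exists 0%N.
have [n [c hc]] := basis_decomp x.
exists (maxn a n) => z; rewrite in_cons => /orP [/eqP ->|/ih].
  apply/in_span_mkseq; exists (fun i => if (i < n)%N then c i else 0).
  by rewrite hc (sum_scale_widen c e (leq_maxr a n)).
move=> /in_span_mkseq [c' ->]; apply/in_span_mkseq.
exists (fun i => if (i < a)%N then c' i else 0).
exact: sum_scale_widen (leq_maxl a n).
Qed.

Lemma basis_fresh_coef0 (g : nat -> nat) N a (c : 'I_N -> F) (b : nat -> F) :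
  injective g -> (forall i, (a <= g i)%N) ->
  \sum_(i < N) c i *: e (g i) = \sum_(k < a) b k *: e k -> forall i, c i = 0.
Proof.
move=> ginj ga h i0.
pose M := maxn a (\max_(i < N) (g i).+1).
have hgM (i : 'I_N) : (g i < M)%N.
  rewrite /M leq_max; apply/orP; right.
  exact: (@leq_bigmax_cond _ xpredT (fun j : 'I_N => (g j).+1) i).
have haM : (a <= M)%N by rewrite leq_maxl.
pose d k := \sum_(i < N | g i == k) c i - (if (k < a)%N then b k else 0).
have hd : \sum_(k < M) d k *: e k = 0.
  under eq_bigr do rewrite scalerBl scaler_suml.
  rewrite sumrB -(sum_scale_widen b e haM) -h; apply/eqP; rewrite subr_eq0; apply/eqP.
  rewrite (exchange_big_dep xpredT) //=; apply: eq_bigr => i _.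
  by rewrite (big_pred1 (Ordinal (hgM i))).
have := basis_coef0 hd (hgM i0); rewrite /d ltnNge ga /= subr0.
rewrite (big_pred1 i0) // => j /=.
by apply/eqP/eqP => [/ginj /val_inj|->].
Qed.

Lemma fresh_combination_notin_span (g : nat -> nat) a N (c : 'I_N -> F) (xs : seq E) :
  injective g -> (forall i, (a <= g i)%N) -> (exists i, c i != 0) ->
  (forall x, x \in xs -> in_span (mkseq e a) x) ->
  ~ in_span xs (\sum_(i < N) c i *: e (g i)).
Proof.
move=> ginj ga [i0 /eqP hi0] hxs /(in_span_trans hxs) /in_span_mkseq [b hb].
by apply: hi0; exact: basis_fresh_coef0 ginj ga hb i0.
Qed.

End NatBasis.

Lemma nat_basis_enum (F : countFieldType) (E : lmodType F) (e : nat -> E) :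
  nat_basis e -> exists y : nat -> E, forall x, exists k, y k = x.
Proof.
move=> he.
pose g (s : seq F) := \sum_(i < size s) nth 0 s i *: e i.
exists (fun k => if @unpickle (seq F) k is Some s then g s else 0).
move=> x; have [n [c ->]] := basis_decomp he x.
exists (pickle (mkseq c n)); rewrite pickleK /g size_mkseq.
by apply: eq_bigr => i _; rewrite nth_mkseq.
Qed.

(** * Countability *)

Lemma countableU T (A B : set T) : countable A -> countable B -> countable (A `|` B).
Proof.
move=> cA cB.
have : countable (\bigcup_(i in [set: bool]) (if i then A else B)).
  by apply: bigcup_countable => // -[].
by apply: sub_countable; apply: subset_card_le => x [ax|bx]; [exists true|exists false].
Qed.

Lemma uncountable_nonempty T (A : set T) : ~ countable A -> exists x, A x.
Proof.
move=> hA; apply: contrapT => hn; apply: hA.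
suff -> : A = set0 by exact: countable0.
by apply/seteqP; split => x // ax; apply: hn; exists x.
Qed.

Lemma uncountableS T (A B : set T) : A `<=` B -> ~ countable A -> ~ countable B.
Proof. by move=> hAB hA hB; apply: hA; apply: sub_countable hB; exact: subset_card_le. Qed.

Lemma uncountable_fiber (U : Type) (C : countType) (X : set U) (g : U -> C) :
  ~ countable X -> exists c, ~ countable (X `&` [set u | g u = c]).
Proof.
move=> hX; apply: contrapT => hn; apply: hX.
have : countable (\bigcup_(c in [set: C]) (X `&` [set u | g u = c])).
  by apply: bigcup_countable => // c _; apply: contrapT => hc; apply: hn; exists c.
by apply: sub_countable; apply: subset_card_le => u hu; exists (g u).
Qed.

Lemma uncountable_agree_on (F : fieldType) (E : lmodType F) (y : nat -> E) (X : set (E -> E)) (xs : seq E) :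
  (forall x, exists k, y k = x) -> ~ countable X ->
  exists T0, X T0 /\ ~ countable (X `&` [set T | agree_on xs T T0]).
Proof.
move=> hy hX; have [yinv hyinv] := choice hy.
have [c hc] := uncountable_fiber (fun T => [seq yinv (T x) | x <- xs]) hX.
have [T0 [hXT0 hT0]] := uncountable_nonempty hc.
exists T0; split => //; apply: uncountableS hc => T [hXT hT]; split => // x hx.
rewrite -(hyinv (T x)) -(hyinv (T0 x)); congr y.
have /eq_in_map hmap : [seq yinv (T x) | x <- xs] = [seq yinv (T0 x) | x <- xs].
  by rewrite hT hT0.
exact: hmap.
Qed.

Lemma bounded_seq_const_subseq (g : nat -> nat) m : (forall n, (g n < m)%N) ->
  exists j (J : nat -> nat), (forall k, (J k < J k.+1)%N) /\ forall k, g (J k) = j.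
Proof.
move=> hg.
have [j hj] : exists j, forall a, exists n, (a <= n)%N /\ g n = j.
  apply: contrapT => hn.
  have hbound j : exists a, forall n, (a <= n)%N -> g n <> j.
    apply: contrapT => hj; apply: hn; exists j => a.
    apply: contrapT => ha; apply: hj; exists a => n han hgn; apply: ha; by exists n.
  have [A hA] := choice hbound.
  pose M := (\max_(j < m) A j)%N.
  apply: (hA (g M) M) => //.
  exact: (@leq_bigmax_cond _ xpredT (fun j : 'I_m => A j) (Ordinal (hg M))).
have [h hh] := choice hj.
pose fix J k := if k is k'.+1 then h (J k').+1 else h 0%N.
exists j, J; split; last by case => [|k] /=; exact: (hh _).2.
by move=> k /=; exact: (hh _).1.
Qed.

Lemma increasing_geq_id (J : nat -> nat) : (forall k, (J k < J k.+1)%N) ->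
  forall k, (k <= J k)%N.
Proof. by move=> hJ; elim=> // k ih; exact: leq_ltn_trans ih (hJ k). Qed.

Lemma increasing_inj (J : nat -> nat) : (forall k, (J k < J k.+1)%N) -> injective J.
Proof.
move=> hJ m n hmn; have hlt := homo_ltn ltn_trans hJ.
by case: (ltngtP m n) => // /hlt; rewrite hmn ltnn.
Qed.

(** * Images of cylinders of the Baire space *)

Definition in_cyl (s : seq nat) (a : nat -> nat) :=
  forall i, (i < size s)%N -> a i = nth 0%N s i.

Lemma nth_prefix (s1 s2 : seq nat) i :
  prefix s1 s2 -> (i < size s1)%N -> nth 0%N s2 i = nth 0%N s1 i.
Proof. by move=> /prefixP [t ->] hi; rewrite nth_cat hi. Qed.

Lemma in_cyl_mkseq a L b : in_cyl (mkseq a L) b <-> forall i, (i < L)%N -> b i = a i.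
Proof. by rewrite /in_cyl size_mkseq; split => h i hi; move: (h i hi); rewrite nth_mkseq. Qed.

Section CylinderImages.
Variables (F : fieldType) (E : lmodType F) (f : (nat -> nat) -> (E -> E)).
Hypothesis hf : baire_continuous f.
Variable y : nat -> E.
Hypothesis hy : forall x, exists k, y k = x.

Definition cyl_image (Q : (E -> E) -> Prop) s : set (E -> E) :=
  [set T | exists a, in_cyl s a /\ Q (f a) /\ f a = T].

Definition cyl_const s K := forall a b, in_cyl s a -> in_cyl s b ->
  forall i, (i < K)%N -> f a (y i) = f b (y i).

Definition cyl_separated s1 s2 K := exists j, (j < K)%N /\
  forall a b, in_cyl s1 a -> in_cyl s2 b -> f a (y j) <> f b (y j).

Definition condensation_point Q a := forall L, ~ countable (cyl_image Q (mkseq a L)).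

Lemma baire_continuous_upto a K : exists L, forall b,
  (forall i, (i < L)%N -> b i = a i) -> forall i, (i < K)%N -> f b (y i) = f a (y i).
Proof.
elim: K => [|K [L1 ih]]; first by exists 0%N.
have [n hn] := hf a (y K).
exists (maxn L1 n) => b hb i; rewrite ltnS leq_eqVlt => /orP [/eqP ->|hi].
  by apply: hn => j hj; apply: hb; exact: leq_trans hj (leq_maxr _ _).
by apply: ih => // j hj; apply: hb; exact: leq_trans hj (leq_maxl _ _).
Qed.

Lemma enum_upto (xs : seq E) :
  exists K, forall x, x \in xs -> exists i, (i < K)%N /\ y i = x.
Proof.
elim: xs => [|x xs [K ih]]; first by exists 0%N.
have [k hk] := hy x.
exists (maxn K k.+1) => z; rewrite in_cons => /orP [/eqP ->|/ih [i [hi <-]]].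
  by exists k; split => //; rewrite leq_max ltnSn orbT.
by exists i; split => //; rewrite leq_max hi.
Qed.

(* The non-condensation points lie in countably many cylinders with countable
   image, so if all condensation points had the same value the image of [s]
   would be countable. *)
Lemma two_condensation_points Q s : ~ countable (cyl_image Q s) ->
  exists a1 a2, (in_cyl s a1 /\ condensation_point Q a1) /\
    (in_cyl s a2 /\ condensation_point Q a2) /\ f a1 <> f a2.
Proof.
move=> hs; apply: contrapT => hn.
pose X := [set a | in_cyl s a /\ Q (f a)].
pose Bad := \bigcup_(p in [set p : seq nat | countable (cyl_image Q p)]) cyl_image Q p.
have cBad : countable Bad by apply: bigcup_countable.
have cGood : countable (f @` (X `&` condensation_point Q)).
  case: (pselect (exists a0, (X `&` condensation_point Q) a0)) => [[a0 [[ha0 _] hc0]]|hne].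
    apply: sub_countable (countable1 (f a0)); apply: subset_card_le.
    move=> T [a [[ha _] hc] <-] /=; apply: contrapT => hT; apply: hn.
    by exists a, a0.
  suff -> : f @` (X `&` condensation_point Q) = set0 by [].
  by apply/seteqP; split => T // [a ha _]; apply: hne; exists a.
apply: hs; apply: sub_countable (countableU cBad cGood); apply: subset_card_le.
move=> T [a [ha [hq <-]]].
case: (pselect (condensation_point Q a)) => hc; first by right; exists a.
left; have [L hL] : exists L, countable (cyl_image Q (mkseq a L)).
  by apply: contrapT => hL; apply: hc => L hcL; apply: hL; exists L.
by exists (mkseq a L) => //; exists a; split => //; apply/in_cyl_mkseq.
Qed.

Definition splitting Q s K (r : seq nat * seq nat * nat) :=
  [/\ prefix s r.1.1 /\ prefix s r.1.2, (size s < size r.1.1)%N /\ (size s < size r.1.2)%N,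
      (K < r.2)%N, ~ countable (cyl_image Q r.1.1) /\ ~ countable (cyl_image Q r.1.2) &
      cyl_const r.1.1 r.2 /\ cyl_const r.1.2 r.2 /\ cyl_separated r.1.1 r.1.2 r.2].

Lemma splitting_exists Q s K : ~ countable (cyl_image Q s) -> exists r, splitting Q s K r.
Proof.
move=> /two_condensation_points [a1 [a2 [[hs1 hc1] [[hs2 hc2] hne]]]].
have [x hx] : exists x, f a1 x <> f a2 x.
  by apply: contrapT => hn; apply: hne; apply: funext => x; apply: contrapT => h; apply: hn; exists x.
have [j hj] := hy x; subst x.
pose K' := (maxn K j).+1.
have [L1 hL1] := baire_continuous_upto a1 K'.
have [L2 hL2] := baire_continuous_upto a2 K'.
pose L := maxn (maxn L1 L2) (size s).+1.
have hL1L : (L1 <= L)%N by rewrite /L !leq_max leqnn.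
have hL2L : (L2 <= L)%N by rewrite /L !leq_max leqnn orbT.
have hsL : (size s < L)%N by rewrite /L leq_max leqnn orbT.
have hprefix a : in_cyl s a -> prefix s (mkseq a L).
  move=> ha; rewrite prefixE; apply/eqP/(@eq_from_nth _ 0%N) => [|i].
    by rewrite size_take size_mkseq hsL.
  rewrite size_take size_mkseq hsL => hi.
  by rewrite nth_take // nth_mkseq ?ha // (ltn_trans hi hsL).
have hconst a0 L0 : (L0 <= L)%N ->
    (forall b, (forall i, (i < L0)%N -> b i = a0 i) ->
      forall i, (i < K')%N -> f b (y i) = f a0 (y i)) ->
    cyl_const (mkseq a0 L) K'.
  move=> hL0 hh a b /in_cyl_mkseq ha /in_cyl_mkseq hb i hi.
  by rewrite !hh // => k hk; [apply: hb|apply: ha]; exact: leq_trans hk hL0.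
exists (mkseq a1 L, mkseq a2 L, K'); split => /=.
- by split; apply: hprefix.
- by rewrite !size_mkseq.
- by rewrite /K' ltnS leq_maxl.
- by split; [apply: hc1|apply: hc2].
split; first exact: hconst hL1L hL1.
split; first exact: hconst hL2L hL2.
exists j; split; first by rewrite /K' ltnS leq_maxr.
move=> a b /in_cyl_mkseq ha /in_cyl_mkseq hb.
rewrite (hL1 a) ?(hL2 b) ?ltnS ?leq_maxr //.
- by move=> k hk; apply: hb; exact: leq_trans hk hL2L.
- by move=> k hk; apply: ha; exact: leq_trans hk hL1L.
Qed.

End CylinderImages.

(** * The fusion tree *)

Fixpoint bit_seqs (n : nat) : seq (seq bool) :=
  if n is n'.+1 then map (cons false) (bit_seqs n') ++ map (cons true) (bit_seqs n')
  else [:: [::]].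

Lemma mem_bit_seqs t : t \in bit_seqs (size t).
Proof.
elim: t => [|b t ih] //=; rewrite mem_cat; case: b; apply/orP; [right|left]; exact: map_f.
Qed.

Lemma size_mem_bit_seqs n t : t \in bit_seqs n -> size t = n.
Proof.
elim: n t => [|n ih] t /=; first by rewrite inE => /eqP ->.
by rewrite mem_cat => /orP [] /mapP [t' /ih h ->] /=; rewrite h.
Qed.

(* The address of the level-[n] node on the branch [b], most recent bit first. *)
Fixpoint branch (b : nat -> bool) n : seq bool :=
  if n is n'.+1 then b n' :: branch b n' else [::].

Lemma size_branch b n : size (branch b n) = n.
Proof. by elim: n => //= n ->. Qed.

Lemma eq_branch b b' n : (forall i, (i < n)%N -> b' i = b i) -> branch b' n = branch b n.
Proof. by elim: n => //= n ih h; rewrite h // ih // => i hi; apply: h; exact: ltnW. Qed.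

Definition rcons_chain (T : Type) (vs : nat -> seq T) :=
  vs 0%N = [::] /\ forall n, exists v, vs n.+1 = rcons (vs n) v.

Section FusionTree.
Variables (F : fieldType) (E : lmodType F) (f : (nat -> nat) -> (E -> E)).
Variable y : nat -> E.
Hypothesis hy : forall x, exists k, y k = x.
Variable Q : seq E -> (E -> E) -> Prop.
Hypothesis Q_rconsl : forall vs v T, Q (rcons vs v) T -> Q vs T.
Hypothesis Q_closed : forall vs T,
  (forall xs : seq E, exists S, Q vs S /\ agree_on xs S T) -> Q vs T.
Variable next_vec : seq E -> seq (seq nat) -> E.
Hypothesis next_vecP : forall vs ss,
  (forall s, s \in ss -> ~ countable (cyl_image f (Q vs) s)) ->
  forall s, s \in ss -> ~ countable (cyl_image f (Q (rcons vs (next_vec vs ss))) s).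
Variable split_of : seq E -> seq nat -> nat -> seq nat * seq nat * nat.
Hypothesis split_ofP : forall vs s K, ~ countable (cyl_image f (Q vs) s) ->
  splitting f y (Q vs) s K (split_of vs s K).
Variable s0 : seq nat.
Hypothesis s0_uncountable : ~ countable (cyl_image f (Q [::]) s0).

(* A node [(s, K)] is a cylinder [s] on which [f] is constant at [y 0], ...,
   [y (K - 1)]. At stage [n + 1] one new vector serves all level-[n] nodes at
   once, then every node is split with respect to the enlarged list. *)
Fixpoint tree_state n : seq E * (seq bool -> seq nat * nat) :=
  if n is n'.+1 then
    let st := tree_state n' in
    let vs := rcons st.1 (next_vec st.1 [seq (st.2 t).1 | t <- bit_seqs n']) in
    (vs, fun t => if t is b :: t' then
                    let r := split_of vs (st.2 t').1 (st.2 t').2 in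
                    (if b then r.1.2 else r.1.1, r.2)
                  else (s0, 0%N))
  else ([::], fun _ => (s0, 0%N)).

Definition tree_vecs n := (tree_state n).1.
Definition tree_node n t := (tree_state n).2 t.

Lemma tree_vecsS n :
  tree_vecs n.+1 = rcons (tree_vecs n) (next_vec (tree_vecs n)
                     [seq (tree_node n t).1 | t <- bit_seqs n]).
Proof. by []. Qed.

Lemma tree_nodeS n b t : tree_node n.+1 (b :: t) =
  let r := split_of (tree_vecs n.+1) (tree_node n t).1 (tree_node n t).2 in
  (if b then r.1.2 else r.1.1, r.2).
Proof. by []. Qed.

Lemma Q_tree_vecs_mono n m T : (n <= m)%N -> Q (tree_vecs m) T -> Q (tree_vecs n) T.
Proof.
elim: m => [|m ih]; first by rewrite leqn0 => /eqP ->.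
rewrite leq_eqVlt => /orP [/eqP -> //|]; rewrite ltnS => h hq; apply: ih => //.
by move: hq; rewrite tree_vecsS; apply: Q_rconsl.
Qed.

Lemma tree_node_inv n t : size t = n ->
  [/\ ~ countable (cyl_image f (Q (tree_vecs n)) (tree_node n t).1),
      (n <= (tree_node n t).2)%N & cyl_const f y (tree_node n t).1 (tree_node n t).2].
Proof.
elim: n t => [|n ih] t; first by move/size0nil => ->; split => // a b _ _ i.
case: t => // b t [ht].
have hnext : ~ countable (cyl_image f (Q (tree_vecs n.+1)) (tree_node n t).1).
  rewrite tree_vecsS; apply: next_vecP; last by apply/mapP; exists t; rewrite -?ht ?mem_bit_seqs.
  by move=> s /mapP [t' /size_mem_bit_seqs /ih [] ? _ _ ->].
have [_ hn _] := ih t ht.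
have [_ _ hK [hu1 hu2] [hc1 [hc2 _]]] := split_ofP (tree_node n t).2 hnext.
by rewrite tree_nodeS; split; case: b => //=; exact: leq_trans hK.
Qed.

Lemma tree_node_splitting n t : size t = n ->
  let: (s, K) := tree_node n t in
  splitting f y (Q (tree_vecs n.+1)) s K (split_of (tree_vecs n.+1) s K).
Proof.
move=> ht; case hst: (tree_node n t) => [s K]; apply: split_ofP.
rewrite tree_vecsS; apply: next_vecP; last by apply/mapP; exists t; rewrite ?hst // -ht mem_bit_seqs.
by move=> s' /mapP [t' /size_mem_bit_seqs /tree_node_inv [] ? _ _ ->].
Qed.

Definition branch_node b n := (tree_node n (branch b n)).1.
Definition branch_bound b n := (tree_node n (branch b n)).2.

Lemma branch_nodeS b n :
  prefix (branch_node b n) (branch_node b n.+1) /\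
  (size (branch_node b n) < size (branch_node b n.+1))%N.
Proof.
have := tree_node_splitting (size_branch b n); rewrite /branch_node [branch b n.+1]/= tree_nodeS.
by case: (tree_node n (branch b n)) => s K [[h1 h2] [h3 h4] _ _ _]; case: (b n).
Qed.

Lemma size_branch_node b n : (n <= size (branch_node b n))%N.
Proof. by elim: n => // n ih; exact: leq_ltn_trans ih (branch_nodeS b n).2. Qed.

Lemma branch_node_prefix b n m : (n <= m)%N -> prefix (branch_node b n) (branch_node b m).
Proof.
elim: m => [|m ih]; first by rewrite leqn0 => /eqP ->; exact: prefix_refl.
rewrite leq_eqVlt => /orP [/eqP ->|]; first exact: prefix_refl.
by rewrite ltnS => /ih h; exact: prefix_trans h (branch_nodeS b m).1.
Qed.

Definition branch_point b i := nth 0%N (branch_node b i.+1) i.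

Lemma in_cyl_branch_point b n : in_cyl (branch_node b n) (branch_point b).
Proof.
move=> i hi; rewrite /branch_point; case: (leqP i.+1 n) => h.
  by rewrite (nth_prefix (branch_node_prefix b h)) // (leq_trans _ (size_branch_node b i.+1)).
by rewrite (nth_prefix (branch_node_prefix b (ltnW h))).
Qed.

Definition branch_map b := f (branch_point b).

Lemma branch_bound_geq b n : (n <= branch_bound b n)%N.
Proof. by have [] := tree_node_inv (size_branch b n). Qed.

Lemma branch_node_const b n : cyl_const f y (branch_node b n) (branch_bound b n).
Proof. by have [] := tree_node_inv (size_branch b n). Qed.

Lemma branch_map_agree b a n i : in_cyl (branch_node b n) a -> (i < n)%N ->
  f a (y i) = branch_map b (y i).
Proof.
move=> ha hi; rewrite /branch_map; apply: (branch_node_const ha (@in_cyl_branch_point b n)).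
exact: leq_trans hi (branch_bound_geq b n).
Qed.

Lemma Q_branch_map b n : Q (tree_vecs n) (branch_map b).
Proof.
apply: Q_closed => xs; have [K hK] := enum_upto hy xs.
pose m := maxn n K.
have [hunc _ _] := tree_node_inv (size_branch b m).
have [T [a [ha [hq _]]]] := uncountable_nonempty hunc.
exists (f a); split; first exact: Q_tree_vecs_mono (leq_maxl n K) hq.
move=> x /hK [i [hi <-]]; apply: branch_map_agree ha _.
exact: leq_trans hi (leq_maxr n K).
Qed.

Definition branch_maps := [set T | exists b, branch_map b = T].

Lemma closure_extend t T :
  (forall xs, exists b, branch b (size t) = t /\ agree_on xs (branch_map b) T) ->
  exists c, forall xs, exists b, branch b (size t).+1 = c :: t /\ agree_on xs (branch_map b) T.
Proof.
move=> hcl; apply: contrapT => /forallNP hn.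
have /existsNP [xs1 hx1] := hn true.
have /existsNP [xs0 hx0] := hn false.
have [b [hb ha]] := hcl (xs1 ++ xs0).
case hbn: (b (size t)).
  apply: hx1; exists b; split; first by rewrite /= hbn hb.
  by move=> x hx; apply: ha; rewrite mem_cat hx.
apply: hx0; exists b; split; first by rewrite /= hbn hb.
by move=> x hx; apply: ha; rewrite mem_cat hx orbT.
Qed.

(* König's lemma: choosing bits one at a time along the nodes whose branches
   accumulate at [T] yields a branch [bs] with [branch_map bs = T]. *)
Lemma branch_maps_closed T :
  (forall xs, exists S, branch_maps S /\ agree_on xs S T) -> branch_maps T.
Proof.
move=> hT.
pose cl t := forall xs, exists b, branch b (size t) = t /\ agree_on xs (branch_map b) T.
pose next t := asbool (cl (true :: t)).
have hnext t : cl t -> cl (next t :: t).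
  move=> /closure_extend [c hc]; rewrite /next; case: asboolP => // hn.
  by case: c hc => // /hn.
pose fix str n := if n is n'.+1 then next (str n') :: str n' else [::].
have hsz n : size (str n) = n by elim: n => //= n ->.
have hcl n : cl (str n).
  elim: n => [|n ih] /=; last exact: hnext.
  by move=> xs; have [S [[b <-] hS]] := hT xs; exists b.
pose bs n := next (str n).
have hbr n : branch bs n = str n by elim: n => //= n ->.
exists bs; apply: funext => x; have [k <-] := hy x.
have [b [hb ha]] := hcl k.+1 [:: y k]; rewrite hsz in hb.
rewrite -(ha (y k)) ?mem_head //; symmetry; apply: branch_map_agree (ltnSn k).
by rewrite /branch_node hbr -hb; exact: in_cyl_branch_point.
Qed.

Lemma tree_node_separated n t : size t = n ->
  cyl_separated f y (tree_node n.+1 (false :: t)).1 (tree_node n.+1 (true :: t)).1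
    (tree_node n.+1 (true :: t)).2.
Proof.
move=> /tree_node_splitting; rewrite !tree_nodeS /=.
by case: (tree_node n t) => s K [_ _ _ _ [_ [_ h]]].
Qed.

(* Flipping bit [K] of [b] gives a branch that agrees with [b] on [y_0..y_(K-1)]
   and is separated from it at level [K + 1]. *)
Lemma branch_maps_not_isolated b xs :
  exists S, branch_maps S /\ S <> branch_map b /\ agree_on xs S (branch_map b).
Proof.
have [K hK] := enum_upto hy xs.
pose b' i := if i == K then ~~ b K else b i.
have hbr : branch b' K = branch b K by apply: eq_branch => i hi; rewrite /b' ltn_eqF.
exists (branch_map b'); split; first by exists b'.
split; last first.
  move=> x /hK [i [hi <-]]; apply: branch_map_agree hi.
  by rewrite /branch_node -hbr; exact: in_cyl_branch_point.
have [j [_ hj]] := tree_node_separated (size_branch b K).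
have hcyl c : in_cyl (tree_node K.+1 (c :: branch b K)).1
                (if c == b K then branch_point b else branch_point b').
  case: eqP => [->|hc]; first exact: (@in_cyl_branch_point b K.+1).
  have -> : c = b' K by rewrite /b' eqxx; move: hc; case: (b K); case: c.
  by rewrite -hbr; exact: (@in_cyl_branch_point b' K.+1).
move=> heq; have := hj _ _ (hcyl false) (hcyl true).
by case: (b K) => /=; rewrite /branch_map in heq; rewrite heq.
Qed.

Lemma fusion_tree : (forall a, LE (f a)) ->
  exists (P : set (E -> E)) (vs : nat -> seq E),
    [/\ (exists T, P T), LE_perfect P, P `<=` range f, rcons_chain vs &
        forall T n, P T -> Q (vs n) T].
Proof.
move=> hLE; exists branch_maps, tree_vecs; split.
- by exists (branch_map (fun _ => false)), (fun _ => false).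
- split; last by move=> T [b <-] xs; exact: branch_maps_not_isolated.
  by split=> [T [b <-]|T _]; [exact: hLE|exact: branch_maps_closed].
- by move=> T [b <-]; exists (branch_point b).
- by split=> // n; rewrite tree_vecsS; eexists.
- by move=> T n [b <-]; exact: Q_branch_map.
Qed.

End FusionTree.

Lemma fusion (F : fieldType) (E : lmodType F) (f : (nat -> nat) -> (E -> E))
    (y : nat -> E) (Q : seq E -> (E -> E) -> Prop) (s0 : seq nat) :
  baire_continuous f -> (forall x, exists k, y k = x) -> (forall a, LE (f a)) ->
  (forall vs v T, Q (rcons vs v) T -> Q vs T) ->
  (forall vs T, (forall xs : seq E, exists S, Q vs S /\ agree_on xs S T) -> Q vs T) ->
  (forall vs (ss : seq (seq nat)),
     (forall s, s \in ss -> ~ countable (cyl_image f (Q vs) s)) ->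
     exists v, forall s, s \in ss -> ~ countable (cyl_image f (Q (rcons vs v)) s)) ->
  ~ countable (cyl_image f (Q [::]) s0) ->
  exists (P : set (E -> E)) (vs : nat -> seq E),
    [/\ (exists T, P T), LE_perfect P, P `<=` range f, rcons_chain vs &
        forall T n, P T -> Q (vs n) T].
Proof.
move=> hf hy hLE Q_rconsl Q_closed Q_step s0_uncountable.
have hnext (p : seq E * seq (seq nat)) : exists v,
    (forall s, s \in p.2 -> ~ countable (cyl_image f (Q p.1) s)) ->
    forall s, s \in p.2 -> ~ countable (cyl_image f (Q (rcons p.1 v)) s).
  case: (pselect (forall s, s \in p.2 -> ~ countable (cyl_image f (Q p.1) s))) => h.
    by have [v hv] := Q_step _ _ h; exists v.
  by exists 0.
have [next nextP] := choice hnext.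
have hsplit (p : seq E * seq nat * nat) : exists r,
    ~ countable (cyl_image f (Q p.1.1) p.1.2) -> splitting f y (Q p.1.1) p.1.2 p.2 r.
  case: (pselect (~ countable (cyl_image f (Q p.1.1) p.1.2))) => h.
    by have [r hr] := splitting_exists hf hy p.2 h; exists r.
  by exists ([::], [::], 0%N).
have [split splitP] := choice hsplit.
exact: (@fusion_tree F E f y hy Q Q_rconsl Q_closed (fun vs ss => next (vs, ss))
  (fun vs ss => nextP (vs, ss)) (fun vs s K => split (vs, s, K))
  (fun vs s K => splitP (vs, s, K)) s0 s0_uncountable hLE).
Qed.

(** * The span of an increasing chain of families *)

Section ChainSpan.
Variables (F : fieldType) (E : lmodType F) (vs : nat -> seq E).
Hypothesis vs_chain : rcons_chain vs.

Definition chain_span := [set v : E | exists n, in_span (vs n) v].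

Lemma in_span_chain_mono n m v : (n <= m)%N -> in_span (vs n) v -> in_span (vs m) v.
Proof.
elim: m => [|m ih]; first by rewrite leqn0 => /eqP ->.
rewrite leq_eqVlt => /orP [/eqP -> //|]; rewrite ltnS => h /(ih h).
by have [x ->] := vs_chain.2 m; apply: in_span_rcons.
Qed.

Lemma chain_span_common u v : chain_span u -> chain_span v ->
  exists n, in_span (vs n) u /\ in_span (vs n) v.
Proof.
move=> [n1 h1] [n2 h2]; exists (maxn n1 n2); split.
  exact: in_span_chain_mono (leq_maxl _ _) h1.
exact: in_span_chain_mono (leq_maxr _ _) h2.
Qed.

Lemma chain_span_subspace : subspace chain_span.
Proof.
split; first by exists 0%N, (fun _ => 0); rewrite big1 // => i _; rewrite scale0r.
move=> a u v hu hv; have [n [[cu ->] [cv ->]]] := chain_span_common hu hv.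
exists n, (fun i => a * cu i + cv i).
rewrite scaler_sumr -big_split /=; apply: eq_bigr => i _.
by rewrite scalerA scalerDl.
Qed.

Lemma size_chain n : size (vs n) = n.
Proof. by elim: n => [|n ih]; [rewrite vs_chain.1|have [v ->] := vs_chain.2 n; rewrite size_rcons ih]. Qed.

Hypothesis vs_indep : forall n, lin_indep (vs n).

Lemma chain_span_infinite_dim : infinite_dim chain_span.
Proof.
move=> n; exists (fun i : 'I_n => nth 0 (vs n) i); split.
  move=> i; exists n, (fun j : nat => (j == i)%:R).
  rewrite (bigD1 (cast_ord (esym (size_chain n)) i)) //= eqxx scale1r big1 ?addr0 //.
  move=> j hj; rewrite (_ : (j == i :> nat) = false) ?scale0r //.
  by apply/negbTE; apply: contra hj => /eqP hji; apply/eqP/val_inj.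
move=> c hc i.
have := @vs_indep n (fun k => if insub k is Some k' then c k' else 0).
move=> /(_ _ i); rewrite valK; apply; last by rewrite size_chain.
rewrite -[RHS]hc; move: (vs n) (size_chain n) => xs ->.
by apply: eq_bigr => k _; rewrite valK.
Qed.

End ChainSpan.

(** * The two cases of the dichotomy *)

Section Dichotomy.
Variables (F : fieldType) (E : lmodType F) (e : nat -> E).
Hypothesis he : nat_basis e.
Variable f : (nat -> nat) -> (E -> E).
Hypothesis hf : baire_continuous f.
Hypothesis hLE : forall a, LE (f a).
Variable y : nat -> E.
Hypothesis hy : forall x, exists k, y k = x.

Definition images_in_span (ws : seq E) (J : nat -> nat) (T : E -> E) :=
  forall k, in_span (map T ws) (T (e (J k))).

Definition kernel_case := exists s ws (J : nat -> nat),
  (forall k, (J k < J k.+1)%N) /\ ~ countable (cyl_image f (images_in_span ws J) s).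

Definition kernel_pred ws J vs (T : E -> E) :=
  images_in_span ws J T /\ lin_indep vs /\ forall x, x \in vs -> T x = 0.

Definition indep_image vs (T : E -> E) := lin_indep (map T vs).

Lemma kernel_pred_rconsl ws J vs v T : kernel_pred ws J (rcons vs v) T -> kernel_pred ws J vs T.
Proof.
move=> [hR [hi hk]]; split => //; split; first exact: lin_indep_rconsl hi.
by move=> x hx; apply: hk; rewrite mem_rcons in_cons hx orbT.
Qed.

Lemma kernel_pred_closed ws J vs T :
  (forall xs, exists S, kernel_pred ws J vs S /\ agree_on xs S T) -> kernel_pred ws J vs T.
Proof.
move=> h; split.
  move=> k; have [S [[hR _] hag]] := h (e (J k) :: ws).
  have <- : map S ws = map T ws by apply/eq_in_map => x hx; apply: hag; rewrite in_cons hx orbT.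
  by rewrite -(hag (e (J k))) ?mem_head.
split; first by have [S [[_ [hi _]] _]] := h [::].
by move=> x hx; have [S [[_ [_ hk]] hag]] := h vs; rewrite -hag // hk.
Qed.

Lemma indep_image_rconsl vs v T : indep_image (rcons vs v) T -> indep_image vs T.
Proof. by rewrite /indep_image map_rcons; apply: lin_indep_rconsl. Qed.

Lemma indep_image_closed vs T :
  (forall xs, exists S, indep_image vs S /\ agree_on xs S T) -> indep_image vs T.
Proof.
move=> h; have [S [hS hag]] := h vs.
rewrite /indep_image; have <- // : map S vs = map T vs.
by apply/eq_in_map => x /hag.
Qed.

(* If no [v] works, every [e n] fails for some node; by pigeonhole one node fails
   for infinitely many [e (J k)], and all its maps but countably many then
   satisfy [images_in_span vs J], contradicting [~ kernel_case]. *)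
Lemma indep_image_step : ~ kernel_case -> forall vs (ss : seq (seq nat)),
  (forall s, s \in ss -> ~ countable (cyl_image f (indep_image vs) s)) ->
  exists v, forall s, s \in ss -> ~ countable (cyl_image f (indep_image (rcons vs v)) s).
Proof.
move=> hnI vs ss hss; apply: contrapT => H.
have hbad v : exists s, s \in ss /\ countable (cyl_image f (indep_image (rcons vs v)) s).
  apply: contrapT => hn; apply: H; exists v => s hs hc; apply: hn; by exists s.
have [sel hsel] := choice hbad.
pose g n := index (sel (e n)) ss.
have hg n : (g n < size ss)%N by rewrite /g index_mem; exact: (hsel _).1.
have [j [J [hJ hJj]]] := bounded_seq_const_subseq hg.
pose s := nth [::] ss j.
have hsJ k : sel (e (J k)) = s.
  by rewrite /s -(hJj k) /g nth_index //; exact: (hsel _).1.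
have hsin : s \in ss by rewrite -(hsJ 0%N); exact: (hsel _).1.
apply: (hss s hsin).
have cR : countable (cyl_image f (images_in_span vs J) s).
  by apply: contrapT => hc; apply: hnI; exists s, vs, J.
have cB : countable (\bigcup_(k in [set: nat]) cyl_image f (indep_image (rcons vs (e (J k)))) s).
  by apply: bigcup_countable => // k _; rewrite -(hsJ k); exact: (hsel _).2.
apply: sub_countable (countableU cR cB); apply: subset_card_le.
move=> T [a [ha [hq <-]]].
case: (pselect (exists k, indep_image (rcons vs (e (J k))) (f a))) => [[k hk]|hn].
  by right; exists k => //; exists a.
left; exists a; split => //; split => // k; apply: contrapT => hk; apply: hn.
by exists k; rewrite /indep_image map_rcons; exact: lin_indep_rcons.
Qed.

(* Fix representatives [T0 j] agreeing with uncountably many maps of node [j]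
   on [ws] and on [N = m * size ws + 1] fresh basis vectors [u i]; each
   [T0 j (u i)] is a combination of [T0 j ws], and a nonzero solution of the
   resulting [m * size ws] equations gives a combination [v] of the [u i] that
   all these maps kill. *)
Lemma kernel_pred_step ws J : (forall k, (J k < J k.+1)%N) ->
  forall vs (ss : seq (seq nat)),
  (forall s, s \in ss -> ~ countable (cyl_image f (kernel_pred ws J vs) s)) ->
  exists v, forall s, s \in ss -> ~ countable (cyl_image f (kernel_pred ws J (rcons vs v)) s).
Proof.
move=> hJ vs ss hss.
case: (pselect (ss = [::])) => [->|hss0]; first by exists 0.
have [s1 hs1] : exists s1, s1 \in ss by case: ss hss0 {hss} => // s1 ss _; exists s1; rewrite mem_head.
have [_ [_ [_ [[_ [hvs _]] _]]]] := uncountable_nonempty (hss s1 hs1).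
pose m := size ss; pose N := (m * size ws).+1.
have [a ha] := seq_in_basis_span he vs.
pose u (i : 'I_N) := e (J (a + i)).
pose xs := ws ++ [seq u i | i <- enum 'I_N].
have hX (j : 'I_m) : ~ countable (cyl_image f (kernel_pred ws J vs) (nth [::] ss j)).
  by apply: hss; exact: mem_nth.
have [T0 hT0] := choice (fun j => uncountable_agree_on xs hy (hX j)).
have hC (p : 'I_m * 'I_N) : exists C : nat -> F,
    T0 p.1 (u p.2) = \sum_(k < size ws) C k *: T0 p.1 (nth 0 ws k).
  have [[al [_ [[hR _] <-]]] _] := hT0 p.1.
  by apply/in_span_map; exact: hR (a + p.2)%N.
have [C hCc] := choice hC.
have hcard : (#|{: 'I_m * 'I_(size ws)}| < N)%N by rewrite card_prod !card_ord.
have [c [hc0 hc]] := homogeneous_system_nontrivial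
  (fun (i : 'I_N) (p : 'I_m * 'I_(size ws)) => C (p.1, i) p.2) hcard.
exists (\sum_(i < N) c i *: u i) => s hs.
have hjm : (index s ss < m)%N by rewrite index_mem.
pose j := Ordinal hjm.
have hsj : nth [::] ss j = s by rewrite /= nth_index.
apply: uncountableS (hT0 j).2 => T [[al [hcyl [[hR [_ hk]] <-]]] hag].
exists al; split; first by rewrite -hsj.
split=> //; split=> //; split.
  apply: lin_indep_rcons hvs _; apply: (fresh_combination_notin_span he (g := fun i => J (a + i)) _ _ hc0 ha).
    by move=> i i' /(increasing_inj hJ) /addnI.
  by move=> i; exact: leq_trans (leq_addr i a) (increasing_geq_id hJ _).
move=> x; rewrite mem_rcons in_cons => /orP [/eqP ->|]; last exact: hk.
apply: (lin_map_vanish (hLE al) (w := fun k => nth 0 ws k) (C := fun i k => C (j, i) k)).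
  move=> i; rewrite hag ?mem_cat ?map_f ?mem_enum ?orbT // (hCc (j, i)).
  by apply: eq_bigr => k _; rewrite hag // mem_cat mem_nth.
by move=> k; exact: hc (j, k).
Qed.

Lemma kernel_case_solution : kernel_case ->
  exists (P : set (E -> E)) (V : set E),
    [/\ (exists T, P T), LE_perfect P, P `<=` range f, subspace V /\ infinite_dim V &
        forall T, P T -> forall v, V v -> T v = 0].
Proof.
move=> [s0 [ws [J [hJ hunc]]]].
have s0_uncountable : ~ countable (cyl_image f (kernel_pred ws J [::]) s0).
  apply: uncountableS hunc => T [a [ha [hR <-]]].
  by exists a; do !split => // c _ i.
have [P [vs [[T0 hT0] hperf hPf hchain hQ]]] := fusion hf hy hLE
  (@kernel_pred_rconsl ws J) (@kernel_pred_closed ws J) (kernel_pred_step hJ) s0_uncountable.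
have hind n : lin_indep (vs n) by have [_ []] := hQ T0 n hT0.
exists P, (chain_span vs); split=> //; first by exists T0.
  by split; [exact: chain_span_subspace|exact: chain_span_infinite_dim].
move=> T hT v [n [c ->]]; have [a _ haT] := hPf T hT.
have [_ [_ hk]] := hQ T n hT.
rewrite -haT (lin_map_sum (hLE a)) big1 // => i _.
by rewrite haT hk ?scaler0 // mem_nth.
Qed.

Lemma injective_case_solution : ~ kernel_case -> ~ countable (range f) ->
  exists (P : set (E -> E)) (V : set E),
    [/\ (exists T, P T), LE_perfect P, P `<=` range f, subspace V /\ infinite_dim V &
        forall T, P T -> forall u v, V u -> V v -> T u = T v -> u = v].
Proof.
move=> hnI hunc.
have s0_uncountable : ~ countable (cyl_image f (indep_image [::]) [::]).
  by apply: uncountableS hunc => T [a _ <-]; exists a; do !split => // c _ i.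
have [P [vs [[T0 hT0] hperf hPf hchain hQ]]] := fusion hf hy hLE
  (@indep_image_rconsl) (@indep_image_closed) (indep_image_step hnI) s0_uncountable.
have hlinP T : P T -> is_linear_map T by move=> /hPf [a _ <-]; exact: hLE.
have hind n : lin_indep (vs n).
  move=> c hc i hi; apply: (hQ T0 n hT0 c) => //; last by rewrite size_map.
  rewrite size_map; under eq_bigr do rewrite (nth_map 0) //.
  by rewrite -lin_map_sum ?hc ?lin_map0 //; exact: hlinP.
exists P, (chain_span vs); split=> //; first by exists T0.
  by split; [exact: chain_span_subspace|exact: chain_span_infinite_dim].
move=> T hT u v hu hv huv.
have [n [[cu hcu] [cv hcv]]] := chain_span_common hchain hu hv.
have hdiff : \sum_(i < size (map T (vs n))) (cu i - cv i) *: nth 0 (map T (vs n)) i = 0.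
  rewrite size_map; under eq_bigr do rewrite (nth_map 0) // scalerBl.
  by rewrite sumrB -!(lin_map_sum (hlinP _ hT)) -hcu -hcv huv subrr.
rewrite hcu hcv; apply: eq_bigr => i _; apply/eqP; rewrite -subr_eq0 -scalerBl.
by rewrite (hQ T n hT (fun i => cu i - cv i) hdiff i) ?size_map ?scale0r.
Qed.

End Dichotomy.

Theorem theorem2p1 (F : countFieldType) (E : lmodType F) (e : nat -> E)
  (he : nat_basis e) (A : set (E -> E))
  (hA : LE_analytic A) (hunc : ~ countable A) :
  exists (P : set (E -> E)) (V : set E),
    (exists T, P T) /\ LE_perfect P /\ P `<=` A /\
    subspace V /\ infinite_dim V /\
    ((forall T, P T -> forall v, V v -> T v = 0) \/
     (forall T, P T -> forall u v, V u -> V v -> T u = T v -> u = v)).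
Proof.
have [hALE [hA0|[f [hf hrange]]]] := hA.
  by exfalso; apply: hunc; rewrite hA0; exact: countable0.
have hLE a : LE (f a) by apply: hALE; rewrite -hrange; exists a.
have [y hy] := nat_basis_enum he.
rewrite -hrange in hunc *.
have [hI|hnI] := pselect (kernel_case e f).
- have [P [V [hne hperf hPf [hV hVinf] hker]]] := kernel_case_solution he hf hLE hy hI.
  by exists P, V; do !split => //; left.
- have [P [V [hne hperf hPf [hV hVinf] hinj]]] := injective_case_solution hf hLE hy hnI hunc.
  by exists P, V; do !split => //; right.
Qed.
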